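(* For all integers $n\ge 36$ and $4\le k\le \frac n6-2$, there exists a feasible simple heterogeneous PV graph $\vec G_R$ with $n$ sites and $k$ carriers such that $$\mathcal M(\vec G_R)\ \ge\ \tfrac1{16}\,(k-3)\,(n^2-2n)^2 .$$ (This holds even though the agent knows $\vec G_R$ and $k$ and has unlimited memory.)
   Context: A PV (periodically varying) system consists of a finite set $S$ of $n$ sites and a set $C$ of $k\le n$ carriers. Each carrier $c$ has a route $\pi(c)=\langle x_0,\dots,x_{p(c)-1}\rangle$, a finite sequence of sites of length $p(c)\ge1$ called its period; $\pi(c)[j]=x_{j\bmod p(c)}$. At each time $t\in\mathbb N$ carrier $c$ is at $\pi(c)[t]$ and moves to $\pi(c)[t+1]$. The PV graph $\vec G_R$ is the directed edge-labelled multigraph on $S$ with edges $(x_i,x_{i+1},i)$, $0\le i<p(c)$, for every carrier. The system is homogeneous if all $p(c)$ are equal, heterogeneous otherwise. A route is simple if $\pi(c)[i]\ne\pi(c)[i+1]$ for all $i$ and, whenever $\pi(c)[i]=\pi(c)[j]$ with $0\le i<j<p(c)$, then $\pi(c)[i+1]\ne\pi(c)[j+1]$ (no self-loops and no repeated directed edge within one period); a PV graph is simple if all its routes are simple. An exploring agent is injected at time $0$ at a site of $\mathrm{start}(\vec G_R)=\{\pi(c)[0]:c\in C\}$; if at time $t$ it is at site $x$ it must either ride one step with some carrier $c$ with $\pi(c)[t]=x$ (one move) or halt; it cannot wait. A strategy solves PVG-Exploration of $\vec G_R$ if from every injection site the agent visits all sites and halts in finite time. $\vec G_R$ is feasible if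 from the starting point of every carrier some realizable walk visits all sites. For feasible $\vec G_R$, $\mathcal M(\vec G_R)$ denotes the minimum, over all deterministic strategies solving PVG-Exploration of $\vec G_R$ (which may use full knowledge of $\vec G_R$ and unlimited memory), of the maximum over injection sites of the number of moves performed. *)

From mathcomp Require Import all_boot.
Set Implicit Arguments. Unset Strict Implicit. Unset Printing Implicit Defensive.

Section PV.
Variables (S C : finType).

(* A PV system: each carrier c has a nonempty route <x_0,...,x_{p-1}>,
   encoded as the pair (x_0, [x_1;...;x_{p-1}]) so that p(c) >= 1. *)
Definition PVsys := C -> S * seq S.

Variable R : PVsys.

Definition route (c : C) : seq S := (R c).1 :: (R c).2.
Definition period (c : C) : nat := size (route c).
Definition pos (c : C) (t : nat) : S := nth (R c).1 (route c) (t %% period c).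

Definition is_start (x : S) : bool := [exists c, pos c 0 == x].

Definition homogeneous : bool := [forall c, [forall d, period c == period d]].
Definition heterogeneous : bool := ~~ homogeneous.

Definition simple_route (c : C) : Prop :=
  (forall i, i < period c -> pos c i != pos c i.+1) /\
  (forall i j, i < j -> j < period c -> pos c i = pos c j ->
     pos c i.+1 <> pos c j.+1).
Definition simple_PV : Prop := forall c, simple_route c.

(* A walk from site x at time t: a sequence of carriers ridden, one per
   time step (the agent cannot wait). *)
Fixpoint valid_walk (x : S) (t : nat) (w : seq C) : bool :=
  if w is c :: w' then (pos c t == x) && valid_walk (pos c t.+1) t.+1 w'
  else true.
Fixpoint walk_sites (x : S) (t : nat) (w : seq C) : seq S :=
  x :: (if w is c :: w' then walk_sites (pos c t.+1) t.+1 w' else [::]).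

Definition explores (x : S) (w : seq C) : bool :=
  valid_walk x 0 w && [forall y, y \in walk_sites x 0 w].

Definition feasible : Prop := forall c, exists w, explores (pos c 0) w.

(* A deterministic strategy with full knowledge and unlimited memory: since
   the system is deterministic, it amounts to the finite walk (sequence of
   carriers ridden, after which the agent halts) it performs from each
   injection site. *)
Definition strategy := S -> seq C.
Definition solves (st : strategy) : Prop :=
  forall x, is_start x -> explores x (st x).
Definition max_moves (st : strategy) : nat :=
  \max_(x | is_start x) size (st x).

End PV.

From mathcomp Require Import all_boot zify.
Set Implicit Arguments. Unset Strict Implicit. Unset Printing Implicit Defensive.

(* Write n = 2h + nmeet + e with nmeet = (k + 1)/2 and e in {0, 1}.  Sites
   0 .. 2h - 1 form the core; site 2h + m (m < nmeet) is a meeting site, and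
   site 2h + nmeet (present iff e) is an extra site.  Carrier j follows a
   "core route" on two blocks of h sites (j even, period 2h^2) or h - 1 sites
   (j odd, period 2(h-1)^2), alternating between the two halves of the core,
   so that two carriers are never on the same core site at the same time.
   Once or twice per period it leaves the core for a meeting site, arranged so
   that carriers j - 1 and j meet exactly at the times congruent to phase j
   modulo L = lcm of the periods = 2h^2(h-1)^2, where phase 1 > phase 2 > ...
   Hence an agent injected on carrier 0 can only be on carrier j after time
   (j - 1)L, and the last meeting site lies only on the last three carriers:
   every exploration takes at least (k - 3)L moves.  Riding the carriers in
   turn along the meeting chain explores everything, so the graph is feasible. *)

Definition delay (p t r : nat) : nat := (r + (p - t %% p)) %% p.

Lemma delay_lt p t r : 0 < p -> delay p t r < p.
Proof. by move=> p_gt0; rewrite ltn_mod. Qed.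

Lemma delay_spec p t r : 0 < p -> (t + delay p t r) %% p = r %% p.
Proof.
move=> p_gt0; rewrite /delay modnDmr {1}(divn_eq t p).
have t_lt : t %% p < p by rewrite ltn_mod.
have -> : t %/ p * p + t %% p + (r + (p - t %% p)) = r + (t %/ p).+1 * p by lia.
by rewrite addnC modnMDl.
Qed.

Lemma modn_addl_inj x a b m : (x + a) %% m = (x + b) %% m -> a %% m = b %% m.
Proof. by move/eqP; rewrite eqn_modDl => /eqP. Qed.

Lemma modn_addl_same x a m : (x + a) %% m = x %% m -> a %% m = 0.
Proof. by rewrite -{2}(addn0 x) => /modn_addl_inj; rewrite mod0n. Qed.

Lemma modn_addr_inj x a b m : (a + x) %% m = (b + x) %% m -> a %% m = b %% m.
Proof. by move/eqP; rewrite eqn_modDr => /eqP. Qed.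

Lemma modnS_neq t p : 1 < p -> t %% p <> t.+1 %% p.
Proof. by move=> Hp /esym; rewrite -addn1 => /modn_addl_same; rewrite modn_small. Qed.

Lemma modn_succ_inj a b p : a < b -> b < p -> a.+1 %% p <> b.+1 %% p.
Proof.
move=> Hab Hbp; rewrite (modn_small (leq_ltn_trans Hab Hbp)).
case: (ltnP b.+1 p) => Hb; first by rewrite modn_small //; lia.
have -> : b.+1 = p by lia.
by rewrite modnn.
Qed.

Section Walks.
Variables (S C : finType) (R : PVsys S C).

Fixpoint walk_end (x : S) (t : nat) (w : seq C) : S :=
  if w is c :: w' then walk_end (pos R c t.+1) t.+1 w' else x.

Lemma valid_walk_cat x t w1 w2 :
  valid_walk R x t (w1 ++ w2) =
  valid_walk R x t w1 && valid_walk R (walk_end x t w1) (t + size w1) w2.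
Proof.
elim: w1 x t => [|c w1 IH] x t /=; first by rewrite addn0.
by rewrite IH addnS -addSn andbA.
Qed.

Lemma walk_sites_catl x t w1 w2 y :
  y \in walk_sites R x t w1 -> y \in walk_sites R x t (w1 ++ w2).
Proof.
elim: w1 x t => [|c w1 IH] x t /=.
  by rewrite inE => /eqP ->; case: w2 => [|? ?]; rewrite /= inE eqxx.
by rewrite !inE => /orP [->|/IH ->]; rewrite ?orbT.
Qed.

Lemma walk_sites_catr x t w1 w2 y :
  y \in walk_sites R (walk_end x t w1) (t + size w1) w2 ->
  y \in walk_sites R x t (w1 ++ w2).
Proof.
elim: w1 x t => [|c w1 IH] x t /=; first by rewrite addn0.
by rewrite addnS -addSn => /IH; rewrite inE => ->; rewrite orbT.
Qed.

Lemma valid_ride c t d : valid_walk R (pos R c t) t (nseq d c).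
Proof. by elim: d t => [|d IH] t //=; rewrite eqxx IH. Qed.

Lemma walk_end_ride c t d : walk_end (pos R c t) t (nseq d c) = pos R c (t + d).
Proof. by elim: d t => [|d IH] t /=; rewrite ?addn0 // IH addnS -addSn. Qed.

Lemma ride_sites c t d i : i <= d ->
  pos R c (t + i) \in walk_sites R (pos R c t) t (nseq d c).
Proof.
elim: d t i => [|d IH] t [|i] //= Hi; rewrite ?addn0 ?inE ?eqxx //.
by rewrite -addSnnS IH ?orbT.
Qed.

Lemma ride_period_sites c t d tau : period R c <= d ->
  pos R c tau \in walk_sites R (pos R c t) t (nseq d c).
Proof.
have p_gt0 : 0 < period R c by [].
move=> Hd; have -> : pos R c tau = pos R c (t + delay (period R c) t tau).
  by rewrite /pos delay_spec.
by apply: ride_sites; rewrite ltnW // (leq_trans (delay_lt _ _ p_gt0)).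
Qed.

Lemma walk_invariant (P : S -> nat -> Prop) :
  (forall x t c, P x t -> pos R c t = x -> P (pos R c t.+1) t.+1) ->
  forall w x t, valid_walk R x t w -> P x t ->
  forall y, y \in walk_sites R x t w ->
  exists t', [/\ t <= t', t' <= t + size w & P y t'].
Proof.
move=> Hstep; elim=> [|c w IH] x t /=.
  move=> _ Hx y; rewrite inE => /eqP ->; exists t; split; rewrite ?addn0 //.
move=> /andP [/eqP Hc Hv] Hx y; rewrite inE => /orP [/eqP ->|Hy].
  by exists t; split; rewrite ?leq_addr.
have [t' [H1 H2 H3]] := IH _ _ Hv (Hstep _ _ _ Hx Hc) y Hy.
by exists t'; split; rewrite ?(ltnW H1) // addnS -addSn.
Qed.

Variable L : nat.
Definition meets (a b : C) : Prop :=
  exists2 r, r < L & forall t, t %% L = r -> pos R a t = pos R b t.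

Fixpoint meet_chain (c : C) (cs : seq C) : Prop :=
  if cs is c' :: cs' then meets c c' /\ meet_chain c' cs' else True.

Lemma meet_chain_walk : (forall c, period R c <= L) ->
  forall cs c t, meet_chain c cs ->
  exists w, valid_walk R (pos R c t) t w /\
    forall c' tau, c' \in c :: cs -> pos R c' tau \in walk_sites R (pos R c t) t w.
Proof.
move=> HL; elim=> [|c1 cs IH] c t /=.
  move=> _; exists (nseq L c); split; first exact: valid_ride.
  by move=> c' tau; rewrite inE => /eqP ->; apply: ride_period_sites.
move=> [[r Hr Hmeet] Hchain].
have L_gt0 : 0 < L by apply: leq_trans (HL c).
set d := L + delay L t r.
have Hd : (t + d) %% L = r by rewrite /d addnCA modnDl delay_spec // modn_small.
have [w' [Hv' Hc']] := IH c1 (t + d) Hchain.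
exists (nseq d c ++ w'); split.
  by rewrite valid_walk_cat valid_ride walk_end_ride size_nseq (Hmeet _ Hd).
move=> c' tau; rewrite inE => /orP [/eqP ->|Hin].
  by apply: walk_sites_catl; apply: ride_period_sites; rewrite (leq_trans (HL c)) ?leq_addr.
by apply: walk_sites_catr; rewrite walk_end_ride size_nseq (Hmeet _ Hd); apply: Hc'.
Qed.

End Walks.

(* Its period divides 2m^2; within one period it
   never repeats a move, and routes with distinct shifts never collide. *)
Definition core (m oE oO i t : nat) : nat :=
  if odd t then oO + (t./2 + t./2 %/ m + i) %% m else oE + (t./2 + i) %% m.

Lemma core_period m oE oO i t : 0 < m ->
  core m oE oO i (t + (m * m).*2) = core m oE oO i t.
Proof.
move=> m_gt0; rewrite /core oddD odd_double addbF halfD odd_double andbF.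
rewrite add0n doubleK; case: (odd t); congr (_ + _).
  have -> : t./2 + m * m + (t./2 + m * m) %/ m + i =
            t./2 + t./2 %/ m + i + (m + 1) * m.
    by rewrite [t./2 + _]addnC divnMDl // mulnDl mul1n; lia.
  by rewrite addnC modnMDl.
by rewrite -addnA (addnC (m * m)) addnA addnC modnMDl.
Qed.

Lemma core_shift_inj m oE oO i i' t : i < m -> i' < m ->
  core m oE oO i t = core m oE oO i' t -> i = i'.
Proof.
by move=> Hi Hi'; rewrite /core; case: (odd t) => /addnI/modn_addl_inj; rewrite !modn_small.
Qed.

Lemma core_mod m oE oO i t : 0 < m ->
  core m oE oO i (t %% (m * m).*2) = core m oE oO i t.
Proof.
move=> m_gt0; rewrite {2}(divn_eq t (m * m).*2) addnC.
by elim: (t %/ _) => [|q IH]; rewrite ?addn0 // mulSn addnCA addnC core_period.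
Qed.

Lemma core_lt m oE oO i t : 0 < m -> core m oE oO i t < maxn oE oO + m.
Proof.
move=> m_gt0; rewrite /core; case: (odd t).
  by have := ltn_pmod (t./2 + t./2 %/ m + i) m_gt0; lia.
by have := ltn_pmod (t./2 + i) m_gt0; lia.
Qed.

Lemma mod_pair_inj m a b : 0 < m -> a < m * m -> b < m * m ->
  a %% m = b %% m -> (a + a %/ m) %% m = (b + b %/ m) %% m -> a = b.
Proof.
move=> m_gt0 Ha Hb Emod Ediag.
have : (b %% m + a %/ m) %% m = (b %% m + b %/ m) %% m.
  by rewrite -{1}Emod !modnDml.
move/modn_addl_inj; rewrite !modn_small ?ltn_divLR // => Ediv.
by rewrite (divn_eq a m) (divn_eq b m) Emod Ediv.
Qed.

Section CoreRoute.
Variables (m oE oO i : nat).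
Hypothesis m_gt0 : 0 < m.
Hypothesis blocks_disjoint : forall x y, x < m -> y < m -> oE + x != oO + y.

Lemma core_parity u v : core m oE oO i u = core m oE oO i v -> odd u = odd v.
Proof.
rewrite /core; case Hu: (odd u); case Hv: (odd v) => // E.
  by move: (blocks_disjoint (ltn_pmod (v./2 + i) m_gt0)
              (ltn_pmod (u./2 + u./2 %/ m + i) m_gt0)); rewrite E eqxx.
by move: (blocks_disjoint (ltn_pmod (u./2 + i) m_gt0)
            (ltn_pmod (v./2 + v./2 %/ m + i) m_gt0)); rewrite E eqxx.
Qed.

Lemma core_move_inj a b : a < (m * m).*2 -> b < (m * m).*2 ->
  core m oE oO i a = core m oE oO i b ->
  core m oE oO i a.+1 = core m oE oO i b.+1 -> a = b.
Proof.
move=> Ha Hb E1 E2; have Epar := core_parity E1.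
have Ha2 : a./2 < m * m by rewrite -ltn_double; lia.
have Hb2 : b./2 < m * m by rewrite -ltn_double; lia.
suff Ehalf : a./2 = b./2.
  by rewrite -(odd_double_half a) -(odd_double_half b) Ehalf Epar.
move: E1 E2; rewrite /core /= -Epar.
case Hoa: (odd a) => /= /addnI E1 /addnI E2; rewrite !uphalf_half -Epar Hoa in E2.
  rewrite -!addnA in E2.
  apply: (mod_pair_inj m_gt0 Ha2 Hb2); last exact: modn_addr_inj E1.
  exact: modn_addr_inj (modn_addl_inj E2).
rewrite !add0n in E2.
apply: (mod_pair_inj m_gt0 Ha2 Hb2); last exact: modn_addr_inj E2.
exact: modn_addr_inj E1.
Qed.

End CoreRoute.

Lemma lcm_periods h : 0 < h -> lcmn (h * h).*2 (h.-1 * h.-1).*2 = 2 * (h * h.-1) ^ 2.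
Proof.
move=> h_gt0; rewrite -!mul2n -muln_lcmr.
have /eqP cop : coprime (h * h) (h.-1 * h.-1).
  by rewrite !mulnn; apply/coprimeXl/coprimeXr/coprimenP.
by rewrite /lcmn cop divn1; nia.
Qed.

Section Construction.
(* The core consists of 2h sites; there are k carriers; e tells whether an
   extra site, visited only by carrier 0, is added (this lets the number of
   sites n = 2h + nmeet + e take every value). *)
Variables (h k : nat) (e : bool).
Hypothesis h_ge3 : 3 <= h.
Hypothesis k_ge2 : 2 <= k.
Hypothesis k_le : k <= (h.-1).*2.

Definition pEven := (h * h).*2.
Definition pOdd := (h.-1 * h.-1).*2.
Definition L := lcmn pEven pOdd.
(* Number of meeting sites: site 2h + m is visited by carriers 2m, 2m+1, 2m+2. *)
Definition nmeet := k.+1./2.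

(* Carriers j - 1 and j meet exactly at the times congruent to phase j modulo
   L; phase decreases with j by pOdd and by 1 alternately. *)
Definition lag (j : nat) : nat := j./2 * pOdd + j.-1./2.
Definition phase (j : nat) : nat := L.-1 - lag j.

Lemma pOdd_gt1 : 1 < pOdd. Proof. rewrite /pOdd; nia. Qed.
Lemma pOdd_lt_pEven : pOdd < pEven. Proof. rewrite /pOdd /pEven; nia. Qed.
Lemma pEven_gt1 : 1 < pEven. Proof. exact: ltn_trans pOdd_gt1 pOdd_lt_pEven. Qed.
Lemma pEven_large : 4 * h <= pEven.-1. Proof. rewrite /pEven; nia. Qed.
Lemma L_gt0 : 0 < L. Proof. by rewrite /L lcmn_gt0 (ltnW pEven_gt1) (ltnW pOdd_gt1). Qed.
Lemma pEven_dvd_L : pEven %| L. Proof. exact: dvdn_lcml. Qed.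
Lemma pOdd_dvd_L : pOdd %| L. Proof. exact: dvdn_lcmr. Qed.

Lemma lag_small : k.+1 * pOdd < L.
Proof. by rewrite /L /pEven /pOdd lcm_periods; nia. Qed.

Lemma modL_eq t x :
  t %% pEven = x %% pEven -> t %% pOdd = x %% pOdd -> t %% L = x %% L.
Proof.
wlog le_xt : t x / x <= t.
  move=> W Ht Hx; case: (leqP x t) => [le_xt|/ltnW le_tx]; first exact: W.
  by symmetry; apply: W.
move=> /eqP Ht /eqP Hx; apply/eqP.
by rewrite eqn_mod_dvd // dvdn_lcm -!eqn_mod_dvd ?Ht.
Qed.

Lemma modL_split t x :
  t %% L = x -> t %% pEven = x %% pEven /\ t %% pOdd = x %% pOdd.
Proof. by move=> <-; rewrite !modn_dvdm ?pEven_dvd_L ?pOdd_dvd_L. Qed.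

Lemma lag_lt j : j <= k.+1 -> lag j < L.
Proof.
move=> Hj; apply: leq_ltn_trans lag_small.
have := pOdd_gt1; rewrite /lag; nia.
Qed.

Lemma phase_lt j : phase j < L.
Proof. have := L_gt0; rewrite /phase; lia. Qed.

Lemma phase1 : phase 1 = L.-1.
Proof. by rewrite /phase /lag /= subn0. Qed.

Lemma phase_step j : 0 < j -> j <= k ->
  phase j = phase j.+1 + (if odd j then pOdd else 1).
Proof.
move=> j_gt0 Hj; have := lag_lt (j := j.+1); rewrite ltnS => /(_ Hj).
rewrite /phase /lag -uphalfE uphalf_half mulnDl.
by case: ifP => Hodd; rewrite ?mul1n ?mul0n; lia.
Qed.

Lemma phase_decr j : 0 < j -> j <= k -> phase j.+1 < phase j.
Proof. by move=> j_gt0 Hj; rewrite (phase_step j_gt0 Hj); have := pOdd_gt1; case: ifP; lia. Qed.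

(* Route of carrier j: its core route, except at two phases of each period
   where it makes a detour to a meeting site (or, for carrier 0, to the extra
   site); a phase equal to per j is never reached and means "no detour". *)
Definition per (j : nat) : nat := if odd j then pOdd else pEven.
Definition base (j t : nat) : nat :=
  if odd j then core h.-1 h 0 j./2 t else core h 0 h j./2 t.
Definition dphase1 (j : nat) : nat :=
  if odd j then phase j %% pOdd else phase j.+1 %% pEven.
Definition dphase2 (j : nat) : nat :=
  if odd j then pOdd
  else if j == 0 then (if e then 0 else pEven) else phase j %% pEven.
Definition dsite1 (j : nat) : nat := 2 * h + j./2.
Definition dsite2 (j : nat) : nat :=
  if j == 0 then 2 * h + nmeet else 2 * h + j./2.-1.
Definition loc (j t : nat) : nat :=
  if t %% per j == dphase1 j then dsite1 j
  else if t %% per j == dphase2 j then dsite2 j else base j t.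

Lemma per_gt1 j : 1 < per j.
Proof. by rewrite /per; case: ifP => _; rewrite ?pOdd_gt1 ?pEven_gt1. Qed.

Lemma per_dvd_L j : per j %| L.
Proof. by rewrite /per; case: ifP => _; rewrite ?pOdd_dvd_L ?pEven_dvd_L. Qed.

Lemma loc_mod j t : loc j (t %% per j) = loc j t.
Proof.
have base_mod : base j (t %% per j) = base j t.
  by rewrite /base /per /pOdd /pEven; case: (odd j); rewrite core_mod //; lia.
by rewrite /loc modn_mod base_mod.
Qed.

Lemma loc_dphase1 j t : t %% per j = dphase1 j -> loc j t = dsite1 j.
Proof. by rewrite /loc => ->; rewrite eqxx. Qed.

Lemma loc_dphase2 j t :
  t %% per j <> dphase1 j -> t %% per j = dphase2 j -> loc j t = dsite2 j.
Proof. by rewrite /loc => /eqP/negbTE -> ->; rewrite eqxx. Qed.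

Lemma loc_base j t :
  t %% per j <> dphase1 j -> t %% per j <> dphase2 j -> loc j t = base j t.
Proof. by rewrite /loc => /eqP/negbTE -> /eqP/negbTE ->. Qed.

Lemma base_lt j t : j < k -> base j t < 2 * h.
Proof.
by move=> Hj; rewrite /base; case: ifP => _; apply: leq_trans (core_lt _ _ _ _ _) _; lia.
Qed.

Lemma base_block j t : (base j t < h) = (odd t == odd j).
Proof.
rewrite /base /core; case: (odd j); case: (odd t) => /=; last 2 first.
- by rewrite ltnNge leq_addr.
- by rewrite add0n ltn_mod; lia.
- by rewrite add0n; have := ltn_pmod (t./2 + t./2 %/ h.-1 + j./2) (_ : 0 < h.-1); lia.
by rewrite ltnNge leq_addr.
Qed.

Lemma base_inj a b t : a < k -> b < k -> base a t = base b t -> a = b.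
Proof.
move=> Ha Hb E.
have Epar : odd a = odd b.
  by have := congr1 (fun x => x < h) E; rewrite /= !base_block; do 3 case: odd.
suff : a./2 = b./2 by lia.
move: E; rewrite /base -Epar; case: (odd a) => /core_shift_inj; apply; lia.
Qed.

Lemma nmeet_gt0 : 0 < nmeet. Proof. rewrite /nmeet; lia. Qed.

Lemma loc_detour j t : j < k -> 2 * h <= loc j t ->
  (t %% per j = dphase1 j /\ loc j t = dsite1 j) \/
  [/\ t %% per j = dphase2 j, loc j t = dsite2 j & ~~ odd j].
Proof.
move=> Hj; rewrite /loc; case: eqP => [E _|_]; first by left.
case: eqP => [E _|_]; last by rewrite leqNgt base_lt.
right; split => //; apply/negP => Hodd; move: E.
by rewrite /per /dphase2 Hodd => E; have := ltn_pmod t (ltnW pOdd_gt1); rewrite E ltnn.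
Qed.

Lemma loc_core j t : loc j t < 2 * h -> loc j t = base j t.
Proof.
rewrite /loc /dsite1 /dsite2; case: eqP => _; first lia.
by case: eqP => _ //; case: eqP => _; lia.
Qed.

Lemma dsite1_neq_dsite2 j : ~~ odd j -> dsite1 j <> dsite2 j.
Proof. by rewrite /dsite1 /dsite2 => Heven; have := nmeet_gt0; case: eqP; lia. Qed.

Lemma loc_detour_inj j a b : j < k -> 2 * h <= loc j a ->
  loc j a = loc j b -> a %% per j = b %% per j.
Proof.
move=> Hj Ha E; have Hb : 2 * h <= loc j b by rewrite -E.
case: (loc_detour Hj Ha) => [[A1 A2]|[A1 A2 A3]];
  case: (loc_detour Hj Hb) => [[B1 B2]|[B1 B2 B3]]; rewrite ?A1 ?B1 //.
  by case: (dsite1_neq_dsite2 B3); rewrite -A2 -B2.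
by case: (dsite1_neq_dsite2 A3); rewrite -A2 -B2.
Qed.

Lemma loc_lt j t : j < k -> loc j t < 2 * h + nmeet + e.
Proof.
move=> Hj; case: (leqP (2 * h) (loc j t)) => [Hge|]; last lia.
case: (loc_detour Hj Hge) => [[_ ->]|[Hph -> Heven]]; rewrite /dsite1 /dsite2 /nmeet.
  lia.
case: eqP => [j0|]; last lia.
move: Hph; rewrite /per /dphase2 j0 /=; case: e => [_|Hph]; first lia.
by have := ltn_pmod t (ltnW pEven_gt1); rewrite Hph ltnn.
Qed.

Lemma extra_site_visitor j t : j < k -> loc j t = 2 * h + nmeet -> j = 0.
Proof.
move=> Hj E; have Hge : 2 * h <= loc j t by rewrite E leq_addr.
case: (loc_detour Hj Hge) => [[_]|[_]]; rewrite E /dsite1 /dsite2 /nmeet.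
  lia.
by case: eqP => // _; lia.
Qed.

Lemma meeting_site_visitors j t m : j < k -> m < nmeet -> loc j t = 2 * h + m ->
  [\/ j = 2 * m /\ t %% pEven = phase (2 * m).+1 %% pEven,
      j = (2 * m).+1 /\ t %% pOdd = phase (2 * m).+1 %% pOdd
    | j = (2 * m).+2 /\ t %% pEven = phase (2 * m).+2 %% pEven].
Proof.
move=> Hj Hm E; have Hge : 2 * h <= loc j t by rewrite E leq_addr.
case: (loc_detour Hj Hge) => [[Hph Hloc]|[Hph Hloc Heven]]; move: Hph Hloc; rewrite E.
  rewrite /per /dphase1 /dsite1; case: ifP => Hodd Hph Hloc.
    have Ej : j = (2 * m).+1 by lia.
    by subst j; constructor 2.
  have Ej : j = 2 * m by lia.
  by subst j; constructor 1.
rewrite /per /dphase2 /dsite2 (negbTE Heven); case: eqP => [_|j_neq0] Hph Hloc; first lia.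
have Ej : j = (2 * m).+2 by lia.
by subst j; constructor 3.
Qed.

Lemma phase_odd j : odd j -> j <= k -> phase j = phase j.+1 + pOdd.
Proof. by move=> Hodd Hj; rewrite phase_step ?Hodd //; case: j Hodd {Hj}. Qed.

Lemma phase_after_even m : (2 * m).+1 <= k -> phase (2 * m).+1 = phase (2 * m).+2 + pOdd.
Proof. by move=> Hm; apply: phase_odd Hm; lia. Qed.

(* Two carriers sharing a meeting site are consecutive and meet at the phase
   of the later one: carriers 2m and 2m + 2 never meet there, since their
   visiting phases differ by pOdd modulo pEven. *)
Lemma meeting_site_meet a b t m : a < b -> b < k -> m < nmeet ->
  loc a t = 2 * h + m -> loc b t = 2 * h + m -> b = a.+1 /\ t %% L = phase b.
Proof.
move=> Hab Hb Hm Ea Eb; have Ha := ltn_trans Hab Hb.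
case: (meeting_site_visitors Ha Hm Ea) => [[Ea' HA]|[Ea' HA]|[Ea' HA]];
  case: (meeting_site_visitors Hb Hm Eb) => [[Eb' HB]|[Eb' HB]|[Eb' HB]];
  subst a b; try by move: Hab; clear; lia.
- by split => //; rewrite (modL_eq HA HB) modn_small ?phase_lt.
- move: HA; rewrite HB phase_after_even ?(ltnW (ltnW Hb)) //.
  move/esym/modn_addl_same; rewrite modn_small ?pOdd_lt_pEven //.
  by move=> pOdd0; move: pOdd_gt1; rewrite pOdd0.
- move: HA; rewrite phase_after_even ?(ltnW (ltnW Hb)) // modnDr => HA.
  by split => //; rewrite (modL_eq HB HA) modn_small ?phase_lt.
Qed.

Lemma meet_consecutive a b t : a < b -> b < k -> loc a t = loc b t ->
  b = a.+1 /\ t %% L = phase b.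
Proof.
move=> Hab Hb E; have Ha := ltn_trans Hab Hb.
case: (ltnP (loc a t) (2 * h)) => [Hcore|Hge].
  have Hcore' : loc b t < 2 * h by rewrite -E.
  move: E; rewrite (loc_core Hcore) (loc_core Hcore') => /(base_inj Ha Hb).
  lia.
have Ea : loc a t = 2 * h + (loc a t - 2 * h) by rewrite subnKC.
move: Ea (loc_lt t Ha); rewrite E; set m := loc b t - 2 * h => Eb Hlt.
have Ea : loc a t = 2 * h + m by rewrite E.
case: (ltngtP m nmeet) => Hm; first exact: meeting_site_meet Hab Hb Hm Ea Eb.
  by move: Hlt; rewrite Eb; case: (e); lia.
move: Ea Eb; rewrite Hm => /(extra_site_visitor Ha) a0 /(extra_site_visitor Hb) b0.
lia.
Qed.

Lemma meet_at_phase j t : j.+1 < k -> t %% L = phase j.+1 -> loc j t = loc j.+1 t.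
Proof.
move=> Hj /modL_split [HA HB]; case Hodd: (odd j).
- have Ej : phase j = phase j.+1 + pOdd by rewrite phase_odd // ltnW // ltnW.
  have Ej1 : phase j.+1 = phase j.+2 + 1 by rewrite phase_step //= ?Hodd // ltnW.
  have Hph1 : t %% per j = dphase1 j by rewrite /per /dphase1 Hodd HB Ej modnDr.
  have Hph2 : t %% per j.+1 = dphase2 j.+1 by rewrite /per /dphase2 /= Hodd /= HA.
  have Hnot1 : t %% per j.+1 <> dphase1 j.+1.
    rewrite /per /dphase1 /= Hodd /= HA Ej1 => /modn_addl_same.
    by rewrite modn_small ?pEven_gt1.
  rewrite (loc_dphase1 Hph1) (loc_dphase2 Hnot1 Hph2).
  by rewrite /dsite1 /dsite2 /= uphalf_half Hodd.
- have Hph : t %% per j = dphase1 j by rewrite /per /dphase1 Hodd HA.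
  have Hph' : t %% per j.+1 = dphase1 j.+1 by rewrite /per /dphase1 /= Hodd /= HB.
  by rewrite (loc_dphase1 Hph) (loc_dphase1 Hph') /dsite1 /= uphalf_half Hodd.
Qed.

(* Earliest time at which an agent injected on carrier 0 at time 0 can be on
   carrier j: it has to hop onto carriers 1, ..., j in turn, at times
   congruent to phase 1 > phase 2 > ... > phase j modulo L. *)
Definition arrival (j : nat) : nat := if j is j'.+1 then j' * L + phase j else 0.

Lemma arrival_step j t : 0 < j -> j < k ->
  arrival j.-1 <= t -> t %% L = phase j -> arrival j <= t.
Proof.
case: j => [//|[|j]] _ Hj /=.
  by rewrite mul0n add0n phase1 => _ <-; apply: leq_mod.
move=> Hprev Ht.
have Hdecr : phase j.+2 < phase j.+1 by apply: phase_decr; lia.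
have Et := divn_eq t L; rewrite Ht in Et.
have Hq : j * L < t %/ L * L by lia.
rewrite ltn_pmul2r ?L_gt0 // in Hq.
by rewrite [leqRHS]Et leq_add2r leq_mul2r Hq orbT.
Qed.

Lemma arrival_mono j : arrival j <= arrival j.+1.
Proof. by case: j => [//|j] /=; have := phase_lt j.+1; lia. Qed.

Lemma arrival_lower j : j.-1 * L <= arrival j.
Proof. by case: j => [//|j] /=; apply: leq_addr. Qed.

Lemma loc_no_loop j t : j < k -> loc j t <> loc j t.+1.
Proof.
move=> Hj E; case: (leqP (2 * h) (loc j t)) => Hge.
  exact: (modnS_neq (per_gt1 j)) (loc_detour_inj Hj Hge E).
have Hge' : loc j t.+1 < 2 * h by rewrite -E.
move: E; rewrite (loc_core Hge) (loc_core Hge') => /(congr1 (fun x => x < h)).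
by rewrite /= !base_block /=; do 2 case: odd.
Qed.

Lemma loc_move_inj j a b : j < k -> a < b -> b < per j ->
  loc j a = loc j b -> loc j a.+1 = loc j b.+1 -> False.
Proof.
move=> Hj Hab Hb E1 E2; have Ha := ltn_trans Hab Hb.
case: (leqP (2 * h) (loc j a)) => H1.
  by move: (loc_detour_inj Hj H1 E1); rewrite !modn_small //; lia.
case: (leqP (2 * h) (loc j a.+1)) => H2.
  exact: (modn_succ_inj Hab Hb) (loc_detour_inj Hj H2 E2).
have H1' : loc j b < 2 * h by rewrite -E1.
have H2' : loc j b.+1 < 2 * h by rewrite -E2.
move: E1 E2.
rewrite (loc_core H1) (loc_core H1') (loc_core H2) (loc_core H2') => E1 E2.
suff : a = b by lia.
move: Ha Hb E1 E2; rewrite /per /base /pOdd /pEven; case: (odd j) => Ha Hb E1 E2.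
  by apply: (core_move_inj _ _ Ha Hb E1 E2) => [|x y Hx Hy]; apply/eqP; lia.
by apply: (core_move_inj _ _ Ha Hb E1 E2) => [|x y Hx Hy]; apply/eqP; lia.
Qed.

Lemma dphase1_0 : dphase1 0 = pEven.-1.
Proof.
have [q Eq] := dvdnP pEven_dvd_L; have := L_gt0; have := pEven_gt1.
rewrite /dphase1 /= phase1 Eq; case: q {Eq} => [//|q] HpE _.
rewrite mulSn (_ : (pEven + q * pEven).-1 = q * pEven + pEven.-1); last lia.
by rewrite modnMDl modn_small // prednK // ltnW.
Qed.

Lemma core_site_visited y : y < 2 * h -> exists t, loc 0 t = y.
Proof.
move=> Hy; have := pEven_large => Hlarge.
have loc0 t : 0 < t < pEven.-1 -> loc 0 t = base 0 t.
  move=> Ht; apply: loc_base; rewrite /per /= modn_small; try lia.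
    by rewrite dphase1_0; lia.
  by rewrite /dphase2 /=; case: (e); lia.
case: (ltnP y h) => Hyh.
  exists (2 * (y + h)); rewrite loc0; last lia.
  rewrite /base /= /core oddM /= mul2n doubleK add0n addn0.
  by rewrite -modnDmr modnn addn0 modn_small.
exists (2 * (y - h)).+1; rewrite loc0; last lia.
rewrite /base /= /core /= oddM /= uphalf_half oddM /= mul2n doubleK.
by rewrite (divn_small (_ : y - h < h)) ?addn0 ?modn_small; lia.
Qed.

Lemma site_visited y : y < 2 * h + nmeet + e -> exists2 j, j < k & exists t, loc j t = y.
Proof.
move=> Hy; case: (ltnP y (2 * h)) => Hcore.
  by exists 0; [lia | exact: core_site_visited].
case: (ltnP y (2 * h + nmeet)) => Hmeet.
  exists (2 * (y - 2 * h)); first by rewrite /nmeet in Hmeet; lia.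
  exists (dphase1 (2 * (y - 2 * h))); rewrite loc_dphase1 /dsite1; first lia.
  by rewrite /per /dphase1 oddM /= modn_mod.
have He : e by case: (e) Hy; lia.
exists 0; first lia; exists 0.
rewrite loc_dphase2; first by move: Hy; rewrite /dsite2 He /=; lia.
  by rewrite mod0n dphase1_0; have := pEven_large; lia.
by rewrite mod0n /dphase2 /= He.
Qed.

Lemma last_meeting_site_visitors j t : j < k -> loc j t = 2 * h + nmeet.-1 -> k.-2 <= j.
Proof.
move=> Hj E; have Hm : nmeet.-1 < nmeet by have := nmeet_gt0; lia.
case: (meeting_site_visitors Hj Hm E) => [[-> _]|[-> _]|[-> _]]; rewrite /nmeet; lia.
Qed.

Variable N : nat.
Hypothesis sites_card : 2 * h + nmeet + e = N.+1.

Definition site (x : nat) : 'I_N.+1 := inord x.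

Definition Rcons : PVsys 'I_N.+1 'I_k :=
  fun c => (site (loc c 0), mkseq (fun i => site (loc c i.+1)) (per c).-1).

Lemma period_Rcons c : period Rcons c = per c.
Proof. by rewrite /period /route /Rcons /= size_mkseq prednK // ltnW ?per_gt1. Qed.

Lemma pos_Rcons c t : pos Rcons c t = site (loc c t).
Proof.
have per_gt0 := ltnW (per_gt1 c).
rewrite /pos period_Rcons -(loc_mod c t).
have := ltn_pmod t per_gt0; case: (t %% per c) => [//|i] Hi.
by rewrite /route /Rcons /= nth_mkseq // -ltnS prednK.
Qed.

Lemma loc_lt_card (c : 'I_k) t : loc c t < N.+1.
Proof. by rewrite -sites_card loc_lt. Qed.

Lemma pos_Rcons_inj (c d : 'I_k) t u : pos Rcons c t = pos Rcons d u -> loc c t = loc d u.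
Proof.
rewrite !pos_Rcons => /(congr1 val); rewrite /site /= !inordK //; exact: loc_lt_card.
Qed.

Lemma Rcons_simple : simple_PV Rcons.
Proof.
move=> c; split=> [i _|i j Hij]; first by apply/eqP => /pos_Rcons_inj; exact: loc_no_loop.
rewrite period_Rcons => Hj /pos_Rcons_inj E1 /pos_Rcons_inj E2.
exact: loc_move_inj (ltn_ord c) Hij Hj E1 E2.
Qed.

Lemma Rcons_heterogeneous : heterogeneous Rcons.
Proof.
have k_gt0 : 0 < k by lia.
apply/negP => /forallP /(_ (Ordinal k_gt0)) /forallP /(_ (Ordinal k_ge2)).
by rewrite !period_Rcons /per /=; have := pOdd_lt_pEven; lia.
Qed.

(* Feasibility: from carrier c, hop down to carrier 0 and then up to k - 1. *)
Fixpoint countdown (j : nat) : seq nat := if j is j'.+1 then j' :: countdown j' else [::].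

Definition adjacent (a b : nat) : bool := (a.+1 == b) || (b.+1 == a).

Lemma mem_countdown i j : (i \in countdown j) = (i < j).
Proof. by elim: j => [//|j IH] /=; rewrite inE IH ltnS [in RHS]leq_eqVlt. Qed.

Lemma path_countdown j : path adjacent j (countdown j).
Proof. by elim: j => [//|j IH] /=; rewrite IH /adjacent eqxx orbT. Qed.

Lemma last_countdown j : last j (countdown j) = 0.
Proof. by elim: j. Qed.

Lemma path_iota s m : path adjacent s (iota s.+1 m).
Proof. by elim: m s => [//|m IH] s /=; rewrite IH /adjacent eqxx. Qed.

Lemma adjacent_meets (c0 : 'I_k) a b : a < k -> b < k -> adjacent a b ->
  meets Rcons L (insubd c0 a) (insubd c0 b).
Proof.
move=> Ha Hb /orP [] /eqP E; [exists (phase b) | exists (phase a)];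
  rewrite ?phase_lt // => t Ht; rewrite !pos_Rcons !val_insubd Ha Hb -E.
  by rewrite (meet_at_phase (j := a)) ?E.
by rewrite (meet_at_phase (j := b)) ?E.
Qed.

Lemma adjacent_chain (c0 : 'I_k) l j : j < k -> all (fun x => x < k) l ->
  path adjacent j l -> meet_chain Rcons L (insubd c0 j) (map (insubd c0) l).
Proof.
elim: l j => [//|a l IH] j Hj /= /andP [Ha Hl] /andP [Hadj Hpath].
by split; [exact: adjacent_meets | exact: IH].
Qed.

Lemma Rcons_feasible : feasible Rcons.
Proof.
move=> c; set l := countdown c ++ iota 1 k.-1.
have Hl : all (fun x => x < k) l.
  by apply/allP => x; rewrite mem_cat mem_countdown mem_iota; have := ltn_ord c; lia.
have Hpath : path adjacent c l by rewrite cat_path path_countdown last_countdown path_iota.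
have := adjacent_chain c (ltn_ord c) Hl Hpath; rewrite valKd => Hchain.
have Hper d : period Rcons d <= L by rewrite period_Rcons dvdn_leq ?L_gt0 ?per_dvd_L.
have [w [Hv Hvisit]] := meet_chain_walk Hper 0 Hchain.
exists w; rewrite /explores Hv /=; apply/forallP => y.
have Hy : val y < 2 * h + nmeet + e by rewrite sites_card ltn_ord.
have [j Hj [t Ht]] := site_visited Hy.
have -> : y = pos Rcons (insubd c j) t.
  have Ej : val (insubd c j) = j by rewrite val_insubd Hj.
  by apply: val_inj; rewrite pos_Rcons Ej Ht /site /= inordK.
apply: Hvisit; rewrite inE; case: (j =P c) => [->|Hjc]; first by rewrite valKd eqxx.
apply/orP; right; apply: map_f.
by rewrite mem_cat mem_countdown mem_iota; have := ltn_ord c; lia.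
Qed.

Lemma arrival_invariant (c d : 'I_k) t :
  arrival d <= t -> pos Rcons c t = pos Rcons d t -> arrival c <= t.+1.
Proof.
move=> Hd /pos_Rcons_inj E; case: (ltngtP c d) => Hcd.
- have [Ed _] := meet_consecutive Hcd (ltn_ord d) E.
  by apply: leq_trans (arrival_mono c) _; rewrite -Ed ltnW.
- have [Ec Ht] := meet_consecutive Hcd (ltn_ord c) (esym E).
  by apply: leqW; apply: (arrival_step _ (ltn_ord c)) Ht; rewrite Ec.
- by rewrite (val_inj Hcd) ltnW.
Qed.

(* Lower bound: an agent injected on carrier 0 is never on a carrier j before
   time arrival j, and the last meeting site is only on carriers j >= k - 2. *)
Lemma Rcons_lower_bound (st : strategy 'I_N.+1 'I_k) :
  solves Rcons st -> (k - 3) * L <= max_moves Rcons st.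
Proof.
move=> Hsolves; have k_gt0 : 0 < k by lia.
set x0 := pos Rcons (Ordinal k_gt0) 0.
have Hx0 : is_start Rcons x0 by apply/existsP; exists (Ordinal k_gt0).
have /andP [Hv /forallP Hall] := Hsolves x0 Hx0.
pose P (x : 'I_N.+1) t := exists c : 'I_k, x = pos Rcons c t /\ arrival c <= t.
have Hstep x t c : P x t -> pos Rcons c t = x -> P (pos Rcons c t.+1) t.+1.
  by move=> [d [-> Hd]] E; exists c; split => //; apply: arrival_invariant Hd E.
have [t [_ Ht [c [Ec Hc]]]] :=
  walk_invariant Hstep Hv (ex_intro _ (Ordinal k_gt0) (conj erefl (leq0n _)))
    (Hall (site (2 * h + nmeet.-1))).
have Hlate : k.-2 <= c.
  apply: (last_meeting_site_visitors (ltn_ord c) (t := t)).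
  move: Ec; rewrite pos_Rcons /site => /(congr1 val); rewrite /= !inordK ?loc_lt_card //.
  by rewrite -sites_card; have := nmeet_gt0; lia.
apply: leq_trans (leq_bigmax_cond _ Hx0); rewrite add0n in Ht.
apply: leq_trans Ht; apply: leq_trans Hc; apply: leq_trans (arrival_lower c).
by rewrite leq_mul2r; lia.
Qed.

Theorem construction : exists R : PVsys 'I_N.+1 'I_k,
  [/\ simple_PV R, heterogeneous R, feasible R &
      forall st : strategy 'I_N.+1 'I_k, solves R st -> (k - 3) * L <= max_moves R st].
Proof.
exists Rcons; split; [exact: Rcons_simple | exact: Rcons_heterogeneous |
  exact: Rcons_feasible | exact: Rcons_lower_bound].
Qed.

End Construction.

Lemma parameters n k : 36 <= n -> 6 * (k + 2) <= n ->
  exists h (e : bool), [/\ 3 <= h, k <= (h.-1).*2, 2 * h + nmeet k + e = n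
                        & n ^ 2 - 2 * n <= 5 * (h * h.-1)].
Proof.
rewrite /nmeet => n_ge36 n_ge; set x := k.+1./2.
exists (n - x)./2, (odd (n - x)).
(* h is about 11n/24 *)
have Hh : 11 * n <= 24 * (n - x)./2 + 6 by lia.
split; try lia.
move: Hh; move: ((n - x)./2) => h Hh; nia.
Qed.

Theorem mainTheorem6 (n k : nat) :
  36 <= n -> 4 <= k -> 6 * (k + 2) <= n ->
  exists R : PVsys 'I_n 'I_k,
    simple_PV R /\ heterogeneous R /\ feasible R /\
    forall st : strategy 'I_n 'I_k, solves R st ->
      (k - 3) * (n ^ 2 - 2 * n) ^ 2 <= 16 * max_moves R st.
Proof.
move=> n_ge36 k_ge4 n_ge.
have [h [e [h_ge3 k_le Hn Hbound]]] := parameters n_ge36 n_ge.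
case: n Hn {n_ge36 n_ge} Hbound => [|N] Hn Hbound; first lia.
have k_ge2 : 2 <= k by lia.
have [R [Rsimple Rhetero Rfeasible Rlower]] := construction h_ge3 k_ge2 k_le Hn.
exists R; split=> //; split=> //; split=> // st /Rlower Hlower.
apply: leq_trans (leq_mul (leqnn 16) Hlower); rewrite mulnCA leq_mul2l orbC.
rewrite /L /pEven /pOdd lcm_periods; last lia.
move: Hbound; move: (N.+1 ^ 2 - 2 * N.+1) (h * h.-1) => a y; nia.
Qed.
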